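(* Let $S,T$ be left semi-braces, $\sigma:T\to\mathrm{Aut}(S)$ a homomorphism from $(T,\cdot)$ into the automorphism group of $(S,+,\cdot)$ (write ${}^ua=\sigma(u)(a)$), and $\delta:S\to\mathrm{End}(T)$ an anti-homomorphism from $(S,+)$ into the automorphism group of $(T,+)$ (write $u^a=\delta(a)(u)$) such that $$(uv)^{\lambda_a({}^ub)}+u\left((u^{-1})^b+w\right)=u\left(v^b+w\right)$$ for all $a,b\in S$, $u,v,w\in T$. Then the double semidirect product of $S$ and $T$ via $\sigma$ and $\delta$, i.e. $S\times T$ with $(a,u)+(b,v)=(a+b,u^b+v)$ and $(a,u)(b,v)=(a\,{}^ub,uv)$, is a left semi-brace. If moreover $S$ and $T$ are left cancellative left semi-braces, then this double semidirect product is a left cancellative left semi-brace.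
   Context: A left semi-brace is a triple $(S,+,\cdot)$ such that $(S,+)$ is a semigroup, $(S,\cdot)$ is a group, and $a(b+c)=ab+a(a^{-1}+c)$ for all $a,b,c\in S$; it is left cancellative if $(S,+)$ is left cancellative. Set $\lambda_a(b)=a(a^{-1}+b)$. An automorphism of $(S,+,\cdot)$ is a bijection preserving both operations. That $\delta$ is an anti-homomorphism from $(S,+)$ means $u^{a+b}=(u^a)^b$ for all $a,b\in S$, $u\in T$. *)

Definition associative {S : Type} (op : S -> S -> S) : Prop :=
  forall a b c, op a (op b c) = op (op a b) c.

Definition group_axioms {S : Type} (mul : S -> S -> S) (one : S) (inv : S -> S) : Prop :=
  associative mul /\
  (forall a, mul one a = a) /\ (forall a, mul a one = a) /\
  (forall a, mul (inv a) a = one) /\ (forall a, mul a (inv a) = one).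

Definition semi_brace_axioms {S : Type} (add mul : S -> S -> S) (one : S) (inv : S -> S) : Prop :=
  associative add /\ group_axioms mul one inv /\
  (forall a b c, mul a (add b c) = add (mul a b) (mul a (add (inv a) c))).

Definition is_left_semi_brace {S : Type} (add mul : S -> S -> S) : Prop :=
  exists (one : S) (inv : S -> S), semi_brace_axioms add mul one inv.

Definition left_cancellative {S : Type} (add : S -> S -> S) : Prop :=
  forall a b c, add a b = add a c -> b = c.

Definition lam {S : Type} (add mul : S -> S -> S) (inv : S -> S) (a b : S) : S :=
  mul a (add (inv a) b).

Definition bijective {S : Type} (f : S -> S) : Prop :=
  exists g : S -> S, (forall x, g (f x) = x) /\ (forall y, f (g y) = y).

Definition dsp_add {S T : Type} (addS : S -> S -> S) (addT : T -> T -> T)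
  (delta : S -> T -> T) (x y : S * T) : S * T :=
  (addS (fst x) (fst y), addT (delta (fst y) (snd x)) (snd y)).

Definition dsp_mul {S T : Type} (mulS : S -> S -> S) (mulT : T -> T -> T)
  (sigma : T -> S -> S) (x y : S * T) : S * T :=
  (mulS (fst x) (sigma (snd x) (fst y)), mulT (snd x) (snd y)).

(* On the first coordinate everything is inherited from S, since each sigma(u)
   is an automorphism and sigma is an action; on the second, associativity of +
   comes from delta being an anti-homomorphism into End(T,+), and the brace
   identity is exactly the compatibility hypothesis once the first coordinate
   of (a,u)((a,u)^-1 + (c,w)) is recognised as lambda_a(^u c). *)


Lemma group_idempotent_one {G : Type} {mul : G -> G -> G} {one : G} {inv : G -> G}
  (s : G) : group_axioms mul one inv -> mul s s = s -> s = one.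
Proof.
  intros [mulA [mul1l [_ [mulVl _]]]] Hss.
  transitivity (mul (mul (inv s) s) s).
  - rewrite mulVl, mul1l. reflexivity.
  - rewrite <- mulA, Hss. apply mulVl.
Qed.

Lemma bijective_idempotent_id {A : Type} (f : A -> A) :
  bijective f -> (forall x, f (f x) = f x) -> forall x, f x = x.
Proof.
  intros [g [gf _]] ff x.
  rewrite <- (gf (f x)), ff. apply gf.
Qed.

Section DoubleSemidirectProduct.

Variables (S T : Type).
Variables (addS mulS : S -> S -> S) (oneS : S) (invS : S -> S).
Variables (addT mulT : T -> T -> T) (oneT : T) (invT : T -> T).
Variables (sigma : T -> S -> S) (delta : S -> T -> T).

Hypothesis sigma_bij : forall u, bijective (sigma u).
Hypothesis sigma_add : forall u a b, sigma u (addS a b) = addS (sigma u a) (sigma u b).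
Hypothesis sigma_mul : forall u a b, sigma u (mulS a b) = mulS (sigma u a) (sigma u b).
Hypothesis sigma_hom : forall u v a, sigma (mulT u v) a = sigma u (sigma v a).
Hypothesis delta_add : forall a u v, delta a (addT u v) = addT (delta a u) (delta a v).
Hypothesis delta_anti : forall a b u, delta (addS a b) u = delta b (delta a u).
Hypothesis compat : forall a b u v w,
  addT (delta (lam addS mulS invS a (sigma u b)) (mulT u v))
       (mulT u (addT (delta b (invT u)) w))
  = mulT u (addT (delta b v) w).

Definition dsp_inv (x : S * T) : S * T :=
  (sigma (invT (snd x)) (invS (fst x)), invT (snd x)).

Lemma dsp_add_assoc :
  associative addS -> associative addT -> associative (dsp_add addS addT delta).
Proof.
  intros addSA addTA [a u] [b v] [c w]; unfold dsp_add; simpl.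
  rewrite addSA, delta_anti, delta_add, addTA. reflexivity.
Qed.

Lemma sigma_fix_one (u : T) : group_axioms mulS oneS invS -> sigma u oneS = oneS.
Proof.
  intros HS. pose proof HS as [_ [mul1l _]].
  apply (group_idempotent_one _ HS).
  rewrite <- sigma_mul, mul1l. reflexivity.
Qed.

Section GroupT.

Hypothesis HT : group_axioms mulT oneT invT.

Lemma sigma_one (a : S) : sigma oneT a = a.
Proof.
  pose proof HT as [_ [mul1l _]].
  apply bijective_idempotent_id; [apply sigma_bij |].
  intro x. rewrite <- sigma_hom, mul1l. reflexivity.
Qed.

Lemma sigma_invK (u : T) (a : S) : sigma u (sigma (invT u) a) = a.
Proof.
  pose proof HT as [_ [_ [_ [_ mulVr]]]].
  rewrite <- sigma_hom, mulVr. apply sigma_one.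
Qed.

Lemma dsp_group :
  group_axioms mulS oneS invS ->
  group_axioms (dsp_mul mulS mulT sigma) (oneS, oneT) dsp_inv.
Proof.
  intros HS.
  pose proof HS as [SmA [Sm1l [Sm1r [SmVl SmVr]]]].
  pose proof HT as [TmA [Tm1l [Tm1r [TmVl TmVr]]]].
  unfold dsp_mul, dsp_inv.
  split; [| split; [| split; [| split]]]; simpl.
  - intros [a u] [b v] [c w]; simpl.
    rewrite sigma_mul, sigma_hom, SmA, TmA. reflexivity.
  - intros [a u]; simpl. rewrite sigma_one, Sm1l, Tm1l. reflexivity.
  - intros [a u]; simpl. rewrite sigma_fix_one, Sm1r, Tm1r by exact HS. reflexivity.
  - intros [a u]; simpl.
    rewrite <- sigma_mul, SmVl, sigma_fix_one, TmVl by exact HS. reflexivity.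
  - intros [a u]; simpl. rewrite sigma_invK, SmVr, TmVr. reflexivity.
Qed.

Lemma dsp_brace_identity :
  (forall a b c, mulS a (addS b c) = addS (mulS a b) (lam addS mulS invS a c)) ->
  forall x y z,
  dsp_mul mulS mulT sigma x (dsp_add addS addT delta y z)
  = dsp_add addS addT delta (dsp_mul mulS mulT sigma x y)
      (dsp_mul mulS mulT sigma x (dsp_add addS addT delta (dsp_inv x) z)).
Proof.
  intros braceS [a u] [b v] [c w]; unfold dsp_mul, dsp_add, dsp_inv; simpl.
  rewrite !sigma_add, sigma_invK, <- (compat a c u v w), braceS.
  reflexivity.
Qed.

End GroupT.

Lemma dsp_semi_brace :
  semi_brace_axioms addS mulS oneS invS ->
  semi_brace_axioms addT mulT oneT invT ->
  semi_brace_axioms (dsp_add addS addT delta) (dsp_mul mulS mulT sigma)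
    (oneS, oneT) dsp_inv.
Proof.
  intros [addSA [HS braceS]] [addTA [HT _]].
  split; [| split].
  - exact (dsp_add_assoc addSA addTA).
  - exact (dsp_group HT HS).
  - exact (dsp_brace_identity HT braceS).
Qed.

Lemma dsp_left_cancellative :
  left_cancellative addS -> left_cancellative addT ->
  left_cancellative (dsp_add addS addT delta).
Proof.
  intros cancS cancT [a u] [b v] [c w]; unfold dsp_add; simpl.
  intros [= Hbc Hvw].
  apply cancS in Hbc; subst c.
  apply cancT in Hvw; subst w.
  reflexivity.
Qed.

End DoubleSemidirectProduct.

Arguments dsp_inv {S T} invS invT sigma x.

Theorem corollary39
  (S T : Type)
  (addS mulS : S -> S -> S) (oneS : S) (invS : S -> S)
  (addT mulT : T -> T -> T) (oneT : T) (invT : T -> T)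
  (HS : semi_brace_axioms addS mulS oneS invS)
  (HT : semi_brace_axioms addT mulT oneT invT)
  (sigma : T -> S -> S) (delta : S -> T -> T)
  (* sigma(u) is an automorphism of (S,+,.) *)
  (Hsig_bij : forall u, bijective (sigma u))
  (Hsig_add : forall u a b, sigma u (addS a b) = addS (sigma u a) (sigma u b))
  (Hsig_mul : forall u a b, sigma u (mulS a b) = mulS (sigma u a) (sigma u b))
  (* sigma is a homomorphism from (T,.) *)
  (Hsig_hom : forall u v a, sigma (mulT u v) a = sigma u (sigma v a))
  (* delta(a) is an automorphism of (T,+) *)
  (Hdel_bij : forall a, bijective (delta a))
  (Hdel_add : forall a u v, delta a (addT u v) = addT (delta a u) (delta a v))
  (* delta is an anti-homomorphism from (S,+): u^(a+b) = (u^a)^b *)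
  (Hdel_anti : forall a b u, delta (addS a b) u = delta b (delta a u))
  (* (uv)^{lambda_a(^u b)} + u((u^{-1})^b + w) = u(v^b + w) *)
  (Hcompat : forall (a b : S) (u v w : T),
      addT (delta (lam addS mulS invS a (sigma u b)) (mulT u v))
           (mulT u (addT (delta b (invT u)) w))
      = mulT u (addT (delta b v) w)) :
  is_left_semi_brace (dsp_add addS addT delta) (dsp_mul mulS mulT sigma) /\
  (left_cancellative addS -> left_cancellative addT ->
   left_cancellative (dsp_add addS addT delta)).
Proof.
  split.
  - exists (oneS, oneT), (dsp_inv invS invT sigma).
    apply dsp_semi_brace; assumption.
  - apply dsp_left_cancellative.
Qed.
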